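(* Let $\mathcal{X}\subseteq\mathbb{R}^2$ be compact. Then $\mathcal{X}$ is standard comonotone if and only if, for all $v\in\{e,-e\}$ and all $\pi\in\Pi_2=\{(1,2),(2,1)\}$, the problem $\max\{v^\top x: x\in\mathcal{X}\}$ admits an optimal solution $\bar x\in\mathcal{Z}(\pi)$.
   Context: $e=(1,1)^\top$. $\Pi_n$ is the set of permutations of $[n]$; for $\pi\in\Pi_n$, $\mathcal{Z}(\pi)=\{x\in\mathbb{R}^n: x_{\pi(1)}\ge\cdots\ge x_{\pi(n)}\}$. A set $\mathcal{X}\subseteq\mathbb{R}^n$ is standard comonotone if for every $\pi\in\Pi_n$ and every $v\in\mathcal{Z}(\pi)$, whenever $\max_{x\in\mathcal{X}}v^\top x$ attains its optimum, it has an optimal solution in $\mathcal{Z}(\pi)$. *)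

From HB Require Import structures.
From mathcomp Require Import all_boot all_order all_algebra all_fingroup.
From mathcomp Require Import all_classical all_reals all_analysis.
Set Implicit Arguments. Unset Strict Implicit. Unset Printing Implicit Defensive.
Import Order.TTheory GRing.Theory Num.Theory.
Import numFieldNormedType.Exports.
Local Open Scope classical_set_scope.
Local Open Scope ring_scope.

Definition dotv (R : realType) (n : nat) (v x : 'rV[R]_n) : R :=
  \sum_(i < n) v ord0 i * x ord0 i.

Definition Zcone (R : realType) (n : nat) (pi : 'S_n) : set 'rV[R]_n :=
  [set x | forall i j : 'I_n, (i <= j)%N -> x ord0 (pi j) <= x ord0 (pi i)].

Definition optimal_sol (R : realType) (n : nat) (X : set 'rV[R]_n) (v xbar : 'rV[R]_n) : Prop :=
  X xbar /\ forall x, X x -> dotv v x <= dotv v xbar.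

Definition attains_max (R : realType) (n : nat) (X : set 'rV[R]_n) (v : 'rV[R]_n) : Prop :=
  exists xbar, optimal_sol X v xbar.

Definition standard_comonotone (R : realType) (n : nat) (X : set 'rV[R]_n) : Prop :=
  forall (pi : 'S_n) (v : 'rV[R]_n), Zcone pi v ->
    attains_max X v -> exists xbar, optimal_sol X v xbar /\ Zcone pi xbar.

Definition evec (R : realType) (n : nat) : 'rV[R]_n := const_mx 1.

(* In the plane, with a = pi(1) and b = pi(2),
     2 v^T x = (v_a + v_b) (x_a + x_b) + (v_a - v_b) (x_a - x_b).
   For v in Z(pi) the second weight is nonnegative, so any point of Z(pi) beats
   a point outside Z(pi) in the second term. The first term is won by a point
   of Z(pi) optimal for e when v_a + v_b >= 0 and by one optimal for -e
   otherwise; such points exist by hypothesis. Conversely, e and -e lie in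
   every Z(pi), and compactness makes every linear maximization attained. *)

From HB Require Import structures.
From mathcomp Require Import all_boot all_order all_algebra all_fingroup.
From mathcomp Require Import all_classical all_reals all_analysis.
From mathcomp Require Import lra.
Import Order.TTheory GRing.Theory Num.Theory.
Import numFieldNormedType.Exports.
Local Open Scope classical_set_scope.
Local Open Scope ring_scope.

Lemma dot2_le (R : realDomainType) (va vb pa pb qa qb : R) :
  0 <= (va + vb) * ((qa + qb) - (pa + pb)) ->
  0 <= (va - vb) * ((qa - qb) - (pa - pb)) ->
  va * pa + vb * pb <= va * qa + vb * qb.
Proof. by move=> *; lra. Qed.

Section AnyDimension.
Context {R : realType} {n : nat}.
Implicit Types (pi : 'S_n) (X : set 'rV[R]_n) (v x p q : 'rV[R]_n).

Lemma dotv_perm pi v x : dotv v x = \sum_(i < n) v ord0 (pi i) * x ord0 (pi i).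
Proof. by rewrite /dotv (reindex_inj (@perm_inj _ pi)). Qed.

Lemma dotv_continuous v : continuous (dotv v).
Proof.
have -> : dotv v = \sum_(i < n) (fun x : 'rV[R]_n => v ord0 i * x ord0 i).
  by apply/funext => x; rewrite /dotv fct_sumE.
apply: (big_ind (fun f : 'rV[R]_n -> R => continuous f)).
- exact: cst_continuous.
- by move=> f g cf cg x; exact: (continuousD (cf x) (cg x)).
- move=> i _ x.
  apply: (@continuousM _ _ (fun=> v ord0 i) (fun y : 'rV[R]_n => y ord0 i)).
    exact: cst_continuous.
  exact: coord_continuous.
Qed.

Lemma compact_attains_max X v : compact X -> X !=set0 -> attains_max X v.
Proof.
move=> cX X0.
have [c Xc maxc] := EVT_max_rV X0 cX (continuous_subspaceT (@dotv_continuous v)).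
exists c; split; first by rewrite inE in Xc.
by move=> x Xx; apply: maxc; rewrite inE.
Qed.

Lemma Zcone_const pi x : (forall i j, x ord0 i = x ord0 j) -> Zcone pi x.
Proof. by move=> xconst i j _; rewrite (xconst (pi i) (pi j)). Qed.

Lemma optimal_sol_le X v p q :
  optimal_sol X v p -> X q -> dotv v p <= dotv v q -> optimal_sol X v q.
Proof. by move=> [_ maxp] Xq pq; split=> // x /maxp /le_trans; apply. Qed.

End AnyDimension.

Lemma ord2_cases (i : 'I_2) : i = ord0 \/ i = ord_max.
Proof. by case: i => [[|[|m]] Hm] //; [left|right]; apply: val_inj. Qed.

Section Plane.
Context {R : realType} (pi : 'S_2).
Implicit Types (v x p q : 'rV[R]_2).
Local Notation a := (pi ord0).
Local Notation b := (pi ord_max).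

Lemma dotv2_perm v x : dotv v x = v ord0 a * x ord0 a + v ord0 b * x ord0 b.
Proof.
rewrite (dotv_perm pi) big_ord_recr big_ord1 /=.
by have -> : widen_ord (leqnSn 1) ord0 = ord0 :> 'I_2 by apply: val_inj.
Qed.

Lemma Zcone2E x : Zcone pi x <-> x ord0 b <= x ord0 a.
Proof.
split=> [|ba i j]; first by apply.
by case: (ord2_cases i) => ->; case: (ord2_cases j) => ->.
Qed.

Lemma dotv2_le_outside_Zcone {v p q} :
  Zcone pi v -> ~ Zcone pi p -> Zcone pi q ->
  0 <= (v ord0 a + v ord0 b) * ((q ord0 a + q ord0 b) - (p ord0 a + p ord0 b)) ->
  dotv v p <= dotv v q.
Proof.
move=> /Zcone2E Zv /Zcone2E /negP; rewrite -ltNge => Np /Zcone2E Zq hsum.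
rewrite !dotv2_perm; apply: dot2_le => //.
by apply: mulr_ge0; lra.
Qed.

End Plane.

Lemma comonotone2_of_pm_evec (R : realType) (X : set 'rV[R]_2) :
  (forall pi, exists q, optimal_sol X (evec R 2) q /\ Zcone pi q) ->
  (forall pi, exists r, optimal_sol X (- evec R 2) r /\ Zcone pi r) ->
  standard_comonotone X.
Proof.
move=> e_opt ne_opt pi v Zv [p optp].
have [Zp | Np] := pselect (Zcone pi p); first by exists p.
have [q [[Xq maxq] Zq]] := e_opt pi; have [r [[Xr maxr] Zr]] := ne_opt pi.
have := maxq p optp.1; have := maxr p optp.1.
rewrite !(dotv2_perm pi) !mxE !mulN1r -!opprD lerN2 !mul1r => sum_rp sum_pq.
have [sv_ge0 | sv_lt0] := lerP 0 (v ord0 (pi ord0) + v ord0 (pi ord_max)).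
- exists q; split=> //; apply: optimal_sol_le optp Xq _.
  apply: (dotv2_le_outside_Zcone pi Zv Np Zq).
  by rewrite mulr_ge0 // subr_ge0.
- exists r; split=> //; apply: optimal_sol_le optp Xr _.
  apply: (dotv2_le_outside_Zcone pi Zv Np Zr).
  by rewrite mulr_le0 ?subr_le0 // ltW.
Qed.

Theorem proposition1 (R : realType) (X : set 'rV[R]_2) :
  compact X -> X !=set0 ->
  (standard_comonotone X <->
   forall (v : 'rV[R]_2), (v = evec R 2 \/ v = - evec R 2) ->
   forall pi : 'S_2, exists xbar, optimal_sol X v xbar /\ Zcone pi xbar).
Proof.
move=> cX X0; split.
- move=> comonX v v_pm_e pi; apply: comonX; last exact: compact_attains_max.
  by apply: Zcone_const => i j; case: v_pm_e => ->; rewrite !mxE.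
- move=> pm_e_opt; apply: comonotone2_of_pm_evec => pi; apply: pm_e_opt.
  + by left.
  + by right.
Qed.
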